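(* For every integer $k$, there exists a strongly connected digraph $D$ with $\chi(D)>k$ that contains no $3$-spindle and no $(2+2)$-bispindle (as a subdigraph).
   Context: Digraphs are finite, without loops or parallel arcs (two opposite arcs $uv$, $vu$ are allowed). The chromatic number $\chi(D)$ of a digraph $D$ is the chromatic number of its underlying undirected graph. A digraph is strongly connected if for any two vertices $x,y$ there is a directed path from $x$ to $y$. For distinct vertices $x,y$, a $p$-spindle with tail $x$ and head $y$ is a union of $p$ pairwise internally vertex-disjoint directed paths from $x$ to $y$. A $(p+q)$-bispindle is the union of $p$ directed $(x,y)$-paths and $q$ directed $(y,x)$-paths for some distinct vertices $x,y$, all these $p+q$ directed paths being pairwise internally vertex-disjoint. *)

From mathcomp Require Import all_boot.
Set Implicit Arguments. Unset Strict Implicit. Unset Printing Implicit Defensive.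

(* Loops are excluded by requiring
   A to be irreflexive; a relation cannot have parallel arcs, while the two
   opposite arcs uv, vu are allowed. *)
Definition loopless (V : finType) (A : rel V) : Prop := irreflexive A.

Definition strongly_connected (V : finType) (A : rel V) : Prop :=
  forall x y : V, connect A x y.

Definition k_colorable (V : finType) (A : rel V) (k : nat) : Prop :=
  exists c : V -> 'I_k, forall u v : V, A u v -> c u != c v.

Definition chi_gt (V : finType) (A : rel V) (k : nat) : Prop :=
  ~ k_colorable A k.

Definition dipath (V : finType) (A : rel V) (x y : V) (p : seq V) : bool :=
  path A x (rcons p y) && uniq (x :: rcons p y).

Definition int_disjoint (V : finType) (p1 p2 : seq V) : bool :=
  [disjoint p1 & p2].

Definition has_spindle (V : finType) (A : rel V) (p : nat) : Prop :=
  exists (x y : V) (P : seq (seq V)),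
    [/\ x != y, size P = p, all (dipath A x y) P, uniq P
      & pairwise (@int_disjoint V) P].

Definition has_bispindle (V : finType) (A : rel V) (p q : nat) : Prop :=
  exists (x y : V) (P Q : seq (seq V)),
    [/\ x != y, size P = p & size Q = q] /\
    [/\ all (dipath A x y) P, all (dipath A y x) Q, uniq P & uniq Q] /\
    [/\ pairwise (@int_disjoint V) P, pairwise (@int_disjoint V) Q
       & allrel (@int_disjoint V) P Q].

(* Start from a loopless digraph D on n vertices with at most one directed
   path between any two vertices and chromatic number > k.  Such digraphs
   exist by Tutte's construction: given one for k, on n vertices, take an
   independent set S of (k+1)n+1 sinks and, for every subset T of S with at
   least n elements, a copy of D with an arc from each vertex to a distinct
   element of T.  Any (k+1)-colouring of the result has a monochromatic such
   T, whose copy avoids that colour and so is k-coloured; and since paths can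
   enter S only at their end, paths stay unique.

   Then wrap D around a directed cycle c_0 -> ... -> c_(2n+1) -> c_0, adding
   arcs v -> c_(rk v) and c_(n+1+rk v) -> v for an injective rank rk into
   [0, n).  The result is strongly connected and contains D.  A cycle vertex
   has one neighbour on the cycle and at most one in D on each side, and
   either its in- or its out-degree is 1; so at most two internally disjoint
   paths start or end there, and it is not an end of a (2+2)-bispindle.
   Between vertices of D, a path either stays in D, and is then unique, or it
   enters the cycle below c_n and leaves it above c_n, so it passes through
   the gate c_n, which only one of several disjoint paths can do. *)

From mathcomp Require Import all_boot zify.
Set Implicit Arguments. Unset Strict Implicit. Unset Printing Implicit Defensive.

Lemma pairwise_sym_in (T : eqType) (r : rel T) s : symmetric r -> pairwise r s ->
  {in s &, forall x y, x != y -> r x y}.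
Proof.
move=> rC; elim: s => //= a s IH /andP[ra rs] x y; rewrite !inE.
case/predU1P=> [->|xs]; case/predU1P=> [->|ys]; rewrite ?eqxx // => neq.
- exact: (allP ra).
- by rewrite rC; apply: (allP ra).
- exact: IH.
Qed.

Lemma count_le1 (T : eqType) (a : pred T) s : uniq s ->
  {in s &, forall x y, a x -> a y -> x = y} -> count a s <= 1.
Proof.
move=> us eq_a; rewrite -size_filter.
have: {in filter a s &, forall x y, x = y}.
  by move=> x y; rewrite !mem_filter => /andP[ax xs] /andP[ay ys]; apply: eq_a.
case: (filter a s) (filter_uniq a us) => [|x [|y t]] //= /andP[+ _] /(_ x y).
by rewrite !inE !eqxx orbT => nxy /(_ isT isT) exy; rewrite exy eqxx in nxy.
Qed.

Lemma ordS_val m (i : 'I_m) : ordS i = (if i.+1 < m then i.+1 else 0) :> nat.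
Proof.
rewrite /=; case: ltnP => [lt_m|le_m]; first by rewrite modn_small.
have -> : i.+1 = m by apply/eqP; rewrite eqn_leq le_m ltn_ord.
by rewrite modnn.
Qed.

Lemma ordS_neq m (i : 'I_m) : 1 < m -> ordS i != i.
Proof.
move=> lt1m; apply/negP => /eqP /(congr1 (@nat_of_ord _)); rewrite ordS_val.
by case: ltnP => h e; lia.
Qed.

Lemma pigeonhole_fiber (T W : finType) (f : T -> W) m :
  #|W| * m < #|T| -> exists a, m < #|[set x | f x == a]|.
Proof.
move=> lt_card; apply/existsP; apply: contraLR lt_card.
rewrite negb_exists -leqNgt => /forallP small.
rewrite -sum1_card (partition_big f predT) //= -sum_nat_const.
by apply: leq_sum => a _; rewrite sum1dep_card leqNgt small.
Qed.

Lemma colorable_avoid (W : finType) (B : rel W) k (c : W -> 'I_k.+1) a :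
  (forall u v, B u v -> c u != c v) -> (forall u, a != c u) -> k_colorable B k.
Proof.
move=> proper avoid; exists (fun u => s2val (unlift_some (avoid u))) => u v /proper.
case: (unlift_some (avoid u)) => i eq_u ?; case: (unlift_some (avoid v)) => j eq_v ? /=.
by rewrite eq_u eq_v (inj_eq (@lift_inj _ a)).
Qed.

Lemma uniq_size_le_card (T : eqType) (W : finType) (h : T -> W) s :
  uniq s -> {in s &, injective h} -> size s <= #|W|.
Proof.
move=> us h_inj; rewrite -(size_map h).
have /card_uniqP <- : uniq (map h s) by rewrite map_inj_in_uniq.
exact: max_card.
Qed.

Section Dipaths.
Variables (V : finType) (A : rel V).

Lemma dipathE x y p : dipath A x y p =
  [&& path A x p, A (last x p) y, uniq (x :: p) & y \notin x :: p].
Proof. by rewrite /dipath rcons_path -rcons_cons rcons_uniq -andbA (andbC (_ \notin _)). Qed.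

Lemma dipath_head x y p : dipath A x y p -> A x (head y p).
Proof. by case: p => [|z p] /andP[] /= /andP[]. Qed.

Lemma dipath_last x y p : dipath A x y p -> A (last x p) y.
Proof. by rewrite dipathE => /and4P[]. Qed.

Lemma dipath_notin x y p : dipath A x y p -> (x \notin p) && (y \notin p).
Proof. by rewrite dipathE inE negb_or => /and4P[_ _ /andP[-> _] /andP[_ ->]]. Qed.

Lemma dipath_map (W : finType) (B : rel W) (f : V -> W) x y p :
  injective f -> (forall u v, B (f u) (f v) = A u v) ->
  dipath B (f x) (f y) (map f p) = dipath A x y p.
Proof.
move=> f_inj fB; rewrite /dipath -map_rcons path_map (eq_path fB) -map_cons.
by rewrite (map_inj_uniq f_inj).
Qed.

Definition unique_dipaths := forall x y p q, dipath A x y p -> dipath A x y q -> p = q.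

Lemma unique_dipaths_last : unique_dipaths -> forall u p q,
  path A u p -> path A u q -> uniq (u :: p) -> uniq (u :: q) ->
  last u p = last u q -> p = q.
Proof.
move=> U u p q; case/lastP: p => [|p w]; case/lastP: q => [|q w'] //=;
  rewrite ?last_rcons.
- by move=> _ _ _ /andP[+ _] eq_u; rewrite eq_u mem_rcons mem_head.
- by move=> _ _ /andP[+ _] _ eq_w; rewrite -eq_w mem_rcons mem_head.
- move=> pp pq up uq eq_w; subst w'; congr rcons.
  by apply: (U u w); apply/andP.
Qed.

Definition path_family x y (P : seq (seq V)) :=
  [/\ all (dipath A x y) P, uniq P & pairwise (@int_disjoint V) P].

Section Family.
Variables (x y : V) (P : seq (seq V)).
Hypothesis famP : path_family x y P.

Lemma family_disjoint : {in P &, forall p q : seq V, p != q -> [disjoint p & q]}.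
Proof.
have disj_sym : symmetric (@int_disjoint V) by move=> p q; rewrite /int_disjoint disjoint_sym.
by case: famP => _ _; apply: pairwise_sym_in.
Qed.

Lemma family_dipath p : p \in P -> dipath A x y p.
Proof. by case: famP => /allP al _ _ /al. Qed.

Lemma family_head_inj : {in P &, injective (head y)}.
Proof.
move=> p q pP qP; have [//|npq] := eqVneq p q.
have dj := family_disjoint pP qP npq.
have /andP[_ yp] := dipath_notin (family_dipath pP).
have /andP[_ yq] := dipath_notin (family_dipath qP).
case: p q {npq pP qP} dj yp yq => [|a p] [|b q] //= dj yp yq.
- by move=> eyb; rewrite eyb mem_head in yq.
- by move=> eay; rewrite -eay mem_head in yp.
- by move=> eab; rewrite eab in dj; have := disjointFr dj (mem_head b p); rewrite mem_head.
Qed.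

Lemma family_last_inj : {in P &, injective (last x)}.
Proof.
move=> p q pP qP; have [//|npq] := eqVneq p q.
have dj := family_disjoint pP qP npq.
have /andP[xp _] := dipath_notin (family_dipath pP).
have /andP[xq _] := dipath_notin (family_dipath qP).
case/lastP: p {npq pP qP} dj xp => [|p a]; case/lastP: q xq => [|q b] //=;
  rewrite ?last_rcons => xq dj xp.
- by move=> exb; rewrite exb mem_rcons mem_head in xq.
- by move=> eax; rewrite -eax mem_rcons mem_head in xp.
- move=> eab; rewrite eab in dj; have := disjointFr dj (_ : b \in rcons p b).
  by rewrite !mem_rcons !mem_head => /(_ isT).
Qed.

Lemma family_size_out (W : finType) (g : V -> W) :
  (forall a b, A x a -> A x b -> g a = g b -> a = b) -> size P <= #|W|.
Proof.
move=> g_inj; case: famP => _ uP _; apply: (uniq_size_le_card (h := g \o head y)) => //.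
move=> p q pP qP /= eq_g; apply: family_head_inj => //.
by apply: g_inj eq_g; apply: dipath_head; apply: family_dipath.
Qed.

Lemma family_size_in (W : finType) (g : V -> W) :
  (forall a b, A a y -> A b y -> g a = g b -> a = b) -> size P <= #|W|.
Proof.
move=> g_inj; case: famP => _ uP _; apply: (uniq_size_le_card (h := g \o last x)) => //.
move=> p q pP qP /= eq_g; apply: family_last_inj => //.
by apply: g_inj eq_g; apply: dipath_last; apply: family_dipath.
Qed.

Lemma family_count_mem z : count (fun p => z \in p) P <= 1.
Proof.
case: famP => _ uP _; apply: count_le1 => // p q pP qP zp zq.
have [//|npq] := eqVneq p q.
by rewrite (disjointFr (family_disjoint pP qP npq) zp) in zq.
Qed.

End Family.
End Dipaths.

Section Tutte.
Variables (k : nat) (V : finType) (A : rel V).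
Local Notation n := #|V|.
Local Notation S := 'I_(k.+1 * n).+1.

Definition tutte_vertex := (S + {set S} * V)%type.

Definition attach (T : {set S}) (u : V) : S := nth ord0 (enum T) (enum_rank u).

Definition tutte_arc (x y : tutte_vertex) : bool :=
  match x, y with
  | inr (T, u), inr (T', v) => (T == T') && A u v
  | inr (T, u), inl s => (n <= #|T|) && (s == attach T u)
  | _, _ => false
  end.

Definition copy (T : {set S}) (u : V) : tutte_vertex := inr (T, u).

Lemma copy_inj T : injective (copy T).
Proof. by move=> u v []. Qed.

Lemma tutte_arc_copy T u v : tutte_arc (copy T u) (copy T v) = A u v.
Proof. by rewrite /= eqxx. Qed.

Lemma attach_in (T : {set S}) u : n <= #|T| -> attach T u \in T.
Proof.
move=> le_nT; rewrite /attach -mem_enum; apply: mem_nth.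
by rewrite -cardE; apply: leq_trans le_nT.
Qed.

Lemma attach_inj (T : {set S}) : n <= #|T| -> injective (attach T).
Proof.
move=> le_nT u v /eqP; rewrite /attach nth_uniq ?enum_uniq -?cardE
  ?(leq_trans (ltn_ord _) le_nT) //.
by move/eqP/val_inj/enum_rank_inj.
Qed.

Lemma copy_dipath T u y p : dipath tutte_arc (copy T u) y p ->
  exists2 p0, p = map (copy T) p0 &
    [/\ path A u p0, uniq (u :: p0) & tutte_arc (copy T (last u p0)) y].
Proof.
have in_copy l : path tutte_arc (copy T u) (rcons l y) -> exists p0, l = map (copy T) p0.
  elim: l u => [|z l IH] u /=; first by exists [::].
  case: z => [s|[T' v]] /=; first by case: l {IH} => [|? ?] /andP[_ /andP[]].
  by case/andP=> /andP[/eqP <- _] /IH [p0 ->]; exists (v :: p0).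
move=> /[dup] dp /andP[/in_copy [p0 Ep] _]; rewrite Ep in dp; exists p0 => //.
rewrite dipathE last_map -map_cons (map_inj_uniq (@copy_inj T)) in dp.
case/and4P: dp => pp0 -> up0 _; split=> //.
by rewrite path_map (eq_path (tutte_arc_copy T)) in pp0.
Qed.

Lemma tutte_unique_dipaths : unique_dipaths A -> unique_dipaths tutte_arc.
Proof.
move=> U [s|[T u]] y p q; first by case: p => [|? ?] /andP[] /=.
move=> dp dq; have [p0 Ep [pp0 up0 ap0]] := copy_dipath dp.
have [q0 Eq [pq0 uq0 aq0]] := copy_dipath dq; rewrite Ep Eq in dp dq *; congr map.
case: y ap0 aq0 dp dq => [s|[T' v]] /=.
- case/andP=> _ /eqP -> /andP[le_nT /eqP /(attach_inj le_nT) eq_last] _ _.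
  exact: unique_dipaths_last U u p0 q0 pp0 pq0 up0 uq0 eq_last.
- case/andP=> /eqP <- _ _; rewrite -[inr (T, u)]/(copy T u) -[inr (T, v)]/(copy T v).
  rewrite !(dipath_map _ _ _ (@copy_inj T) (tutte_arc_copy T)).
  exact: U.
Qed.

Lemma tutte_irreflexive : irreflexive A -> irreflexive tutte_arc.
Proof. by move=> irrA [s|[T u]] //=; rewrite eqxx irrA. Qed.

Lemma tutte_not_colorable : ~ k_colorable A k -> ~ k_colorable tutte_arc k.+1.
Proof.
move=> not_col [c proper].
have [a big] : exists a, n < #|[set s : S | c (inl s) == a]|.
  by apply: pigeonhole_fiber; rewrite !card_ord.
set T := [set s | _] in big; have le_nT := ltnW big.
apply: not_col; apply: (@colorable_avoid _ _ _ (fun u => c (copy T u)) a).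
  by move=> u v uv; apply: proper; rewrite tutte_arc_copy.
move=> u; have := proper (copy T u) (inl (attach T u)); rewrite /= le_nT eqxx => /(_ isT).
by have := attach_in u le_nT; rewrite inE => /eqP ->; rewrite eq_sym.
Qed.

End Tutte.

Lemma exists_unique_dipaths_not_colorable k : exists (V : finType) (A : rel V),
  [/\ unique_dipaths A, irreflexive A & ~ k_colorable A k].
Proof.
elim: k => [|k [V [A [U irrA not_col]]]].
  exists unit, (fun _ _ => false); split=> //; last by case=> c _; case: (c tt).
  by move=> x y [|? ?] ? /andP[].
exists (tutte_vertex k V), (tutte_arc A); split.
- exact: tutte_unique_dipaths.
- exact: tutte_irreflexive.
- exact: tutte_not_colorable.
Qed.

Section Circuit.
Variables (V : finType) (A : rel V) (n : nat) (rk : V -> 'I_n).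
Hypothesis rk_inj : injective rk.
Local Notation m := n.*2.+2.

Definition circuit_vertex := (V + 'I_m)%type.

Definition circuit_arc (x y : circuit_vertex) : bool :=
  match x, y with
  | inl u, inl v => A u v
  | inl u, inr i => i == rk u :> nat
  | inr i, inr j => j == ordS i
  | inr i, inl v => i == n.+1 + rk v :> nat
  end.

Definition is_base (x : circuit_vertex) : bool := if x is inl _ then true else false.

Definition gate : circuit_vertex := inr (inord n).

Lemma circuit_irreflexive : irreflexive A -> irreflexive circuit_arc.
Proof.
move=> irrA [u|i] /=; first exact: irrA.
by apply/negbTE; rewrite eq_sym ordS_neq.
Qed.

Lemma dipath_base x y p : dipath circuit_arc (inl x) (inl y) (map inl p) = dipath A x y p.
Proof. by apply: dipath_map => //; apply: inl_inj. Qed.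

Lemma all_base p : all is_base p -> exists p0, p = map inl p0.
Proof.
elim: p => [|[v|i] p IH] //=; first by exists [::].
by case/IH=> p0 ->; exists (v :: p0).
Qed.

Lemma circuit_out_inj i a b : circuit_arc (inr i) a -> circuit_arc (inr i) b ->
  is_base a = is_base b -> a = b.
Proof.
case: a b => [u|j] [v|j'] //= /eqP ha /eqP hb _; last by rewrite ha hb.
by congr inl; apply/rk_inj/ord_inj/(@addnI n.+1); rewrite -ha.
Qed.

Lemma circuit_in_inj j a b : circuit_arc a (inr j) -> circuit_arc b (inr j) ->
  is_base a = is_base b -> a = b.
Proof.
case: a b => [u|i] [v|i'] //= /eqP ha /eqP hb _.
  by congr inl; apply/rk_inj/ord_inj; rewrite -ha.
by congr inr; apply: ordS_inj; rewrite -ha -hb.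
Qed.

Lemma circuit_outdeg_le1 (i : 'I_m) a b : i <= n ->
  circuit_arc (inr i) a -> circuit_arc (inr i) b -> a = b.
Proof.
case: a b => [u|j] [v|j'] //= le_in /eqP ha /eqP hb; try lia.
by rewrite ha hb.
Qed.

Lemma circuit_indeg_le1 (i : 'I_m) a b : n < i ->
  circuit_arc a (inr i) -> circuit_arc b (inr i) -> a = b.
Proof.
have rk_small u : n < rk u = false by rewrite ltnNge (ltnW (ltn_ord _)).
case: a b => [u|j] [v|j'] //= lt_ni /eqP ha /eqP hb.
- by rewrite ha rk_small in lt_ni.
- by rewrite ha rk_small in lt_ni.
- by rewrite hb rk_small in lt_ni.
- by congr inr; apply: ordS_inj; rewrite -ha -hb.
Qed.

Lemma gate_on_path (i : 'I_m) l : i <= n -> path circuit_arc (inr i) l ->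
  is_base (last (inr i) l) -> gate \in inr i :: l.
Proof.
elim: l i => [|w l IH] i le_in //= /andP[arc p_l] b_l.
have [eq_in|lt_in] := eqVneq (i : nat) n.
  rewrite in_cons (_ : gate = inr i) ?eqxx // /gate.
  by apply/congr1/ord_inj; rewrite inordK //; lia.
case: w arc p_l b_l => [v|j] /eqP arc p_l b_l; first by move: le_in; rewrite arc; lia.
rewrite in_cons (IH j) ?orbT //; rewrite arc ordS_val; case: ltnP => h; lia.
Qed.

Lemma base_path x l : path circuit_arc (inl x) l -> is_base (last (inl x) l) ->
  all is_base l \/ gate \in l.
Proof.
elim: l x => [|[v|i] l IH] x /=; first by left.
  case/andP=> _ /IH h /h [-> | g]; [by left | by right; rewrite in_cons g orbT].
case/andP=> /eqP arc p_l b_l; right; apply: gate_on_path p_l b_l.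
by rewrite arc ltnW.
Qed.

Lemma base_dipath x y p : dipath circuit_arc (inl x) (inl y) p ->
  all is_base p \/ gate \in p.
Proof.
case/andP=> pp _; have [] := base_path pp; first by rewrite last_rcons.
  by rewrite all_rcons => /andP[_ ->]; left.
by rewrite mem_rcons in_cons => /orP[//|]; right.
Qed.

Lemma gate_free_count x y P : unique_dipaths A ->
  path_family circuit_arc (inl x) (inl y) P -> count (fun p => gate \notin p) P <= 1.
Proof.
move=> U fam; case: (fam) => _ uP _; apply: count_le1 => // p q pP qP.
have dp := family_dipath fam pP; have dq := family_dipath fam qP.
case: (base_dipath dp) => [bp|->//]; case: (base_dipath dq) => [bq|->//] _ _.
have [p0 Ep] := all_base bp; have [q0 Eq] := all_base bq.
rewrite Ep Eq !dipath_base in dp dq *; congr map; exact: U dp dq.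
Qed.

Lemma circuit_cycle_connect (i j : 'I_m) : i <= j -> connect circuit_arc (inr i) (inr j).
Proof.
case: j => j; elim: j => [|j IH] lt_jm /= le_ij.
  by have -> : i = Ordinal lt_jm by apply: ord_inj => /=; lia.
have [eq_ij|ne_ij] := eqVneq (i : nat) j.+1.
  by have -> : i = Ordinal lt_jm by apply: ord_inj.
apply: connect_trans (IH (ltnW lt_jm) _) (connect1 _); first by simpl; lia.
by rewrite /= -(inj_eq (@ord_inj _)) ordS_val lt_jm.
Qed.

Lemma circuit_strongly_connected : strongly_connected circuit_arc.
Proof.
have wrap : circuit_arc (inr ord_max) (inr ord0).
  by rewrite /= -(inj_eq (@ord_inj _)) ordS_val ltnn.
have to_hub x : connect circuit_arc x (inr ord0).
  have cyc i : connect circuit_arc (inr i) (inr ord0).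
    exact: connect_trans (@circuit_cycle_connect i ord_max (leq_ord i)) (connect1 wrap).
  case: x => [v|i]; last exact: cyc.
  apply: connect_trans (connect1 _) (cyc (inord (rk v))).
  by rewrite /= inordK //; have := ltn_ord (rk v); lia.
have from_hub y : connect circuit_arc (inr ord0) y.
  case: y => [v|j]; last exact: circuit_cycle_connect.
  apply: (@connect_trans _ _ (inr (inord (n.+1 + rk v)))).
    exact: circuit_cycle_connect.
  by apply: connect1; rewrite /= inordK //; have := ltn_ord (rk v); lia.
by move=> x y; apply: connect_trans (to_hub x) (from_hub y).
Qed.

Lemma circuit_chi_gt k : ~ k_colorable A k -> chi_gt circuit_arc k.
Proof.
move=> not_col [c proper]; apply: not_col.
by exists (fun v => c (inl v)) => u v /(proper (inl u) (inl v)).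
Qed.

Lemma circuit_no_spindle3 : unique_dipaths A -> ~ has_spindle circuit_arc 3.
Proof.
move=> U [x [y [P [_ sizeP paths uniqP disjP]]]].
have fam : path_family circuit_arc x y P by [].
suff : size P <= 2 by rewrite sizeP.
case: x {paths uniqP disjP} fam => [x|i] fam.
  2: by have := family_size_out fam (@circuit_out_inj i); rewrite card_bool.
case: y fam => [y|j] fam.
  2: by have := family_size_in fam (@circuit_in_inj j); rewrite card_bool.
rewrite -(count_predC (fun p => gate \in p)).
exact: leq_add (family_count_mem fam gate) (gate_free_count U fam).
Qed.

Lemma circuit_families_le1 i w F G :
  path_family circuit_arc (inr i) w F -> path_family circuit_arc w (inr i) G ->
  (size F <= 1) || (size G <= 1).
Proof.
move=> famF famG; have [le_in|lt_ni] := leqP i n.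
  have := family_size_out famF (g := fun=> tt)
    (fun a b ha hb _ => circuit_outdeg_le1 le_in ha hb).
  by rewrite card_unit => ->.
have := family_size_in famG (g := fun=> tt)
  (fun a b ha hb _ => circuit_indeg_le1 lt_ni ha hb).
by rewrite card_unit orbC => ->.
Qed.

Lemma gate_family x y P : unique_dipaths A ->
  path_family circuit_arc (inl x) (inl y) P -> 1 < size P -> has (fun p => gate \in p) P.
Proof.
move=> U fam; apply: contraLR => /hasPn no_gate; rewrite -leqNgt.
have := gate_free_count U fam.
by rewrite (eq_in_count (a2 := predT)) ?count_predT // => p /no_gate ->.
Qed.

Lemma circuit_no_bispindle22 : unique_dipaths A -> ~ has_bispindle circuit_arc 2 2.
Proof.
move=> U [x [y [P [Q [[_ sizeP sizeQ] [[pathsP pathsQ uP uQ] [disjP disjQ disjPQ]]]]]]].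
have famP : path_family circuit_arc x y P by [].
have famQ : path_family circuit_arc y x Q by [].
case: x {pathsP pathsQ} famP famQ => [x|i] famP famQ.
  2: by have := circuit_families_le1 famP famQ; rewrite sizeP sizeQ.
case: y famP famQ => [y|j] famP famQ.
  2: by have := circuit_families_le1 famQ famP; rewrite sizeP sizeQ.
have [p pP gp] : exists2 p, p \in P & gate \in p.
  by apply/hasP/(gate_family U famP); rewrite sizeP.
have [q qQ gq] : exists2 q, q \in Q & gate \in q.
  by apply/hasP/(gate_family U famQ); rewrite sizeQ.
by have := allrelP disjPQ p q pP qQ; rewrite /int_disjoint => /disjointFr/(_ gp); rewrite gq.
Qed.

End Circuit.

Theorem mainTheorem1 :
  forall k : nat,
    exists (V : finType) (A : rel V),
      [/\ loopless A, strongly_connected A, chi_gt A k,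
          ~ has_spindle A 3 & ~ has_bispindle A 2 2].
Proof.
move=> k; have [V [A [U irrA not_col]]] := exists_unique_dipaths_not_colorable k.
exists (circuit_vertex V #|V|), (circuit_arc A (@enum_rank V)); split.
- exact: circuit_irreflexive.
- exact: circuit_strongly_connected.
- exact: circuit_chi_gt.
- exact: circuit_no_spindle3 (@enum_rank_inj V) U.
- exact: circuit_no_bispindle22 U.
Qed.
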